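(* Let $m_1,m_2\in\mathbb{N}$ be relatively prime and $\alpha\in\mathbb{R}$. (i) If $m_1+m_2$ is odd, then the set $\mathrm{LS}_\alpha=\{\boldsymbol{\varrho}^{(\boldsymbol{m})}_\alpha(t_l):\ l\in\{0,\dots,4m_1m_2-1\}\}$, with $t_l=\frac{l\pi}{2m_1m_2}$, is exactly the union of all self-intersection points and all boundary points of the closed curve $\boldsymbol{\varrho}^{(\boldsymbol{m})}_\alpha$. It contains $2m_1m_2+1$ points: the center $(0,0)$, which is traversed $2m_2$ times in one period $2\pi$; $2(m_1-1)m_2$ ordinary double points distinct from $(0,0)$; and $2m_2$ points on the unit circle. (ii) If $m_1+m_2$ is even, then the curve $\boldsymbol{\varrho}^{(\boldsymbol{m})}_\alpha$ has $\frac12(m_1-1)m_2$ ordinary double points distinct from $(0,0)$ and $m_2$ points on the unit circle, and the center $(0,0)$ is traversed $m_2$ times in one (minimal) period $\pi$.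
   Context: For $\boldsymbol{m}=(m_1,m_2)\in\mathbb{N}^2$ and $\alpha\in\mathbb{R}$, the rhodonea curve is $\boldsymbol{\varrho}^{(\boldsymbol{m})}_\alpha(t)=\big(\cos(m_2t)\cos(m_1t-\alpha\pi),\ \cos(m_2t)\sin(m_1t-\alpha\pi)\big)$, $t\in\mathbb{R}$, with values in the unit disk $\mathbb{D}=\{x\in\mathbb{R}^2:|x|\le1\}$. For relatively prime $m_1,m_2$ its minimal period $P$ is $2\pi$ if $m_1+m_2$ is odd and $\pi$ if $m_1+m_2$ is even. A point $x$ of the curve is a self-intersection point if there are at least two distinct parameters $t\in[0,P)$ with $\boldsymbol{\varrho}^{(\boldsymbol{m})}_\alpha(t)=x$; it is an ordinary double point if there are exactly two such parameters; it is a boundary point if $|x|=1$. ''Traversed $k$ times in one period'' means there are exactly $k$ parameters $t\in[0,P)$ with $\boldsymbol{\varrho}^{(\boldsymbol{m})}_\alpha(t)=x$. *)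

From Stdlib Require Import Reals Lra Lia List.
Open Scope R_scope.

Definition rho (m1 m2 : nat) (alpha t : R) : R * R :=
  (cos (INR m2 * t) * cos (INR m1 * t - alpha * PI),
   cos (INR m2 * t) * sin (INR m1 * t - alpha * PI)).

Definition period (m1 m2 : nat) : R :=
  if Nat.odd (m1 + m2) then 2 * PI else PI.

Definition on_curve (m1 m2 : nat) (alpha : R) (x : R * R) : Prop :=
  exists t : R, rho m1 m2 alpha t = x.

Definition traversed (m1 m2 : nat) (alpha : R) (x : R * R) (k : nat) : Prop :=
  exists L : list R, NoDup L /\ length L = k /\
    forall t : R, In t L <->
      (0 <= t < period m1 m2 /\ rho m1 m2 alpha t = x).

Definition self_intersection (m1 m2 : nat) (alpha : R) (x : R * R) : Prop :=
  exists t1 t2 : R, t1 <> t2 /\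
    0 <= t1 < period m1 m2 /\ 0 <= t2 < period m1 m2 /\
    rho m1 m2 alpha t1 = x /\ rho m1 m2 alpha t2 = x.

Definition ordinary_double_point (m1 m2 : nat) (alpha : R) (x : R * R) : Prop :=
  traversed m1 m2 alpha x 2.

Definition boundary_point (m1 m2 : nat) (alpha : R) (x : R * R) : Prop :=
  on_curve m1 m2 alpha x /\ sqrt (fst x * fst x + snd x * snd x) = 1.

Definition LS (m1 m2 : nat) (alpha : R) (x : R * R) : Prop :=
  exists l : nat, (l < 4 * m1 * m2)%nat /\
    x = rho m1 m2 alpha (INR l * PI / (2 * INR m1 * INR m2)).

Definition has_card (S : R * R -> Prop) (n : nat) : Prop :=
  exists L : list (R * R), NoDup L /\ length L = n /\
    forall x, In x L <-> S x.

(* In polar form [rho t] has radius [cos (m2 t)] and angle [m1 t - alpha PI], so two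
   parameters give the same nonzero point iff the angles differ by [k PI] and
   [cos (m2 t) = cos (m2 s + k PI)].  For coprime [m1, m2] the branch
   [m2 t = m2 s + k PI (mod 2 PI)] forces [t = s] modulo the period, hence every
   self-intersection comes from the reflected branch, which puts both parameters on the
   grid [t_j = j PI / (2 m1 m2)].  There everything is arithmetic modulo [2 m1]: the origin
   is hit at [j = m1], the unit circle at [j = 0], and any other node [j] is a double point
   exactly when [2 m1 | j + k (m1 + m2)] is solvable in [k] -- always if [m1 + m2] is odd,
   only for even [j] if [m1 + m2] is even -- and a simple point otherwise.  Counting
   residues gives the stated numbers. *)

From Pilot Require Import Defs.
From Stdlib Require Import Reals Lra Lia List ZArith Znumtheory Classical.
Open Scope R_scope.

Ltac push_IZR := repeat rewrite ?plus_IZR, ?minus_IZR, ?mult_IZR, ?opp_IZR, <- ?INR_IZR_INZ.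

Lemma Rmult_PI_reg_r x y : x * PI = y * PI -> x = y.
Proof. intro H. apply Rmult_eq_reg_r with PI; [lra|]. pose proof PI_RGT_0; lra. Qed.

Definition sign_of_parity (k : Z) : R := if Z.even k then 1 else -1.

Lemma cos_IZR_PI k : cos (IZR k * PI) = sign_of_parity k.
Proof.
  unfold sign_of_parity.
  induction k as [|k IH|k IH] using Z.peano_ind.
  - rewrite Rmult_0_l, cos_0. reflexivity.
  - rewrite succ_IZR, Rmult_plus_distr_r, Rmult_1_l, neg_cos, IH, Z.even_succ, <- Z.negb_even.
    destruct (Z.even k); simpl; lra.
  - rewrite <- Z.sub_1_r, minus_IZR, Z.even_sub in *.
    replace ((IZR k - 1) * PI) with (IZR k * PI - PI) by ring.
    rewrite cos_minus, cos_PI, sin_PI, IH. destruct (Z.even k); simpl; lra.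
Qed.

Lemma cos_add_IZR_PI y k : cos (y + IZR k * PI) = sign_of_parity k * cos y.
Proof.
  rewrite cos_plus, cos_IZR_PI, (sin_eq_0_1 (IZR k * PI)) by (exists k; reflexivity). ring.
Qed.

Lemma sin_add_IZR_PI y k : sin (y + IZR k * PI) = sign_of_parity k * sin y.
Proof.
  rewrite sin_plus, cos_IZR_PI, (sin_eq_0_1 (IZR k * PI)) by (exists k; reflexivity). ring.
Qed.

Lemma sign_of_parity_sqr k : sign_of_parity k * sign_of_parity k = 1.
Proof. unfold sign_of_parity. destruct (Z.even k); ring. Qed.

Lemma cos_add_2PI_mult y q : cos (y + 2 * IZR q * PI) = cos y.
Proof.
  replace (2 * IZR q * PI) with (IZR (2 * q) * PI) by (rewrite mult_IZR; ring).
  rewrite cos_add_IZR_PI. unfold sign_of_parity. rewrite Z.even_mul. simpl. ring.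
Qed.

Lemma cos_eq_cos a b : cos a = cos b ->
  exists q : Z, a = b + 2 * IZR q * PI \/ a = - b + 2 * IZR q * PI.
Proof.
  intro H. pose proof (form2 a b) as F.
  assert (E : sin ((a - b) / 2) * sin ((a + b) / 2) = 0) by lra.
  apply Rmult_integral in E. destruct E as [E|E]; apply sin_eq_0_0 in E;
  destruct E as [k Hk]; exists k; [left|right]; lra.
Qed.

Lemma IZR_PI_div_2m (j b : Z) (m : nat) : (1 <= m)%nat ->
  IZR j * PI / (2 * INR m) = IZR b * PI -> j = (2 * Z.of_nat m * b)%Z.
Proof.
  intros Hm H. apply (le_INR 1 m) in Hm. simpl in Hm. pose proof PI_RGT_0.
  apply eq_IZR, Rmult_PI_reg_r. push_IZR.
  replace (IZR j * PI) with (IZR j * PI / (2 * INR m) * (2 * INR m)) by (field; lra).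
  rewrite H. ring.
Qed.

Lemma Zdivide_sub_range_eq (a b n : Z) :
  (0 <= a < n)%Z -> (0 <= b < n)%Z -> (n | a - b)%Z -> a = b.
Proof. intros Ha Hb [r Hr]. assert (r = 0)%Z by nia. subst. lia. Qed.

Lemma Z_mod_eq_iff_divide (j d r : Z) : (0 <= r < d)%Z -> (j mod d = r <-> (d | j - r))%Z.
Proof.
  intro Hr. split.
  - intro E. exists (j / d)%Z. pose proof (Z.div_mod j d ltac:(lia)). nia.
  - intros [c Hc]. symmetry. apply Z.mod_unique with c; lia.
Qed.

(** * Finite sets of points *)

Definition zrange (n : nat) : list Z := map Z.of_nat (seq 0 n).

Lemma In_zrange c n : In c (zrange n) <-> (0 <= c < Z.of_nat n)%Z.
Proof.
  unfold zrange. rewrite in_map_iff. split.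
  - intros [i [<- Hi]]. apply in_seq in Hi. lia.
  - intro H. exists (Z.to_nat c). split; [lia|]. apply in_seq. lia.
Qed.

Lemma NoDup_zrange n : NoDup (zrange n).
Proof.
  apply NoDup_map_NoDup_ForallPairs; [|apply seq_NoDup]. intros a b _ _. lia.
Qed.

Lemma length_zrange n : length (zrange n) = n.
Proof. unfold zrange. rewrite length_map, length_seq. reflexivity. Qed.

Lemma NoDup_list_prod {A B} (l : list A) (l' : list B) :
  NoDup l -> NoDup l' -> NoDup (list_prod l l').
Proof.
  induction 1 as [|a l Ha Hl IH]; intro H'; simpl; [constructor|].
  apply NoDup_app; auto.
  - apply NoDup_map_NoDup_ForallPairs; [|exact H']. intros x y _ _ E. injection E; auto.
  - intros p Hp Hp2. apply in_map_iff in Hp. destruct Hp as [b [<- _]].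
    apply in_prod_iff in Hp2. tauto.
Qed.

Definition residue_grid (d : Z) (n : nat) (R : list Z) : list Z :=
  map (fun p => d * fst p + snd p)%Z (list_prod (zrange n) R).

Section ResidueGrid.
Variables (d : Z) (n : nat) (R : list Z).
Hypotheses (d_pos : (0 < d)%Z) (R_residues : forall r, In r R -> (0 <= r < d)%Z).

Lemma In_residue_grid j :
  In j (residue_grid d n R) <-> (0 <= j < d * Z.of_nat n)%Z /\ In (j mod d) R.
Proof.
  unfold residue_grid. rewrite in_map_iff. split.
  - intros [[c r] [<- Hp]]. apply in_prod_iff in Hp. destruct Hp as [Hc Hr].
    apply In_zrange in Hc. pose proof (R_residues r Hr). cbn [fst snd].
    rewrite Z.add_comm, Z.mul_comm, Z.mod_add, Z.mod_small by lia. split; [nia|exact Hr].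
  - intros [Hj Hr]. exists (j / d, j mod d)%Z. cbn [fst snd]. split.
    + symmetry. apply Z.div_mod. lia.
    + apply in_prod_iff. split; [|exact Hr]. apply In_zrange. split.
      * apply Z.div_pos; lia.
      * apply Z.div_lt_upper_bound; lia.
Qed.

Lemma NoDup_residue_grid : NoDup R -> NoDup (residue_grid d n R).
Proof.
  intro ND. apply NoDup_map_NoDup_ForallPairs.
  - intros [c r] [c' r'] Hp Hp' E. cbn [fst snd] in E.
    apply in_prod_iff in Hp, Hp'. pose proof (R_residues r (proj2 Hp)).
    pose proof (R_residues r' (proj2 Hp')). assert (c = c') by nia. subst c'.
    f_equal. lia.
  - apply NoDup_list_prod; [apply NoDup_zrange|exact ND].
Qed.

Lemma length_residue_grid : length (residue_grid d n R) = (n * length R)%nat.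
Proof. unfold residue_grid. rewrite length_map, length_prod, length_zrange. reflexivity. Qed.

End ResidueGrid.

Lemma has_card_ext (P Q : R * R -> Prop) n :
  (forall x, P x <-> Q x) -> has_card P n -> has_card Q n.
Proof.
  intros PQ [L [ND [Len HL]]]. exists L. split; [exact ND|split; [exact Len|]].
  intro x. rewrite HL. apply PQ.
Qed.

Lemma has_card_singleton (a : R * R) : has_card (fun x => x = a) 1.
Proof.
  exists (a :: nil). split; [|split; [reflexivity|]].
  - apply NoDup_cons; [simpl; tauto|apply NoDup_nil].
  - intro x. simpl. split; [intros [<-|[]]; reflexivity|intros ->; left; reflexivity].
Qed.

Lemma has_card_disjoint_union (P Q : R * R -> Prop) a b :
  has_card P a -> has_card Q b -> (forall x, P x -> Q x -> False) ->
  has_card (fun x => P x \/ Q x) (a + b).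
Proof.
  intros [L [ND [Len HL]]] [L' [ND' [Len' HL']]] Disj. exists (L ++ L'). split; [|split].
  - apply NoDup_app; auto. intros x H H'. apply (Disj x); [apply HL|apply HL']; auto.
  - rewrite length_app. lia.
  - intro x. rewrite in_app_iff, HL, HL'. tauto.
Qed.

Lemma has_card_image (f : Z -> R * R) (S : list Z) :
  NoDup S -> (forall i j, In i S -> In j S -> f i = f j -> i = j) ->
  has_card (fun x => exists j, In j S /\ x = f j) (length S).
Proof.
  intros ND Inj. exists (map f S). split; [|split].
  - apply NoDup_map_NoDup_ForallPairs; auto.
  - apply length_map.
  - intro x. rewrite in_map_iff. split; intros [j [E Hj]]; exists j; auto.
Qed.

Lemma length_filter_lt_involution (S : list Z) (sg : Z -> Z) :
  NoDup S -> (forall x, In x S -> In (sg x) S /\ sg x <> x /\ sg (sg x) = x) ->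
  (2 * length (filter (fun x => Z.ltb x (sg x)) S) = length S)%nat.
Proof.
  intros ND H. rewrite <- (filter_length (fun x => Z.ltb x (sg x)) S).
  assert (Hmap : forall p q : Z -> bool,
            (forall x, In x S -> p x = true -> q (sg x) = true) ->
            (length (filter p S) <= length (filter q S))%nat).
  { intros p q Hpq. rewrite <- (length_map sg). apply NoDup_incl_length.
    - apply NoDup_map_NoDup_ForallPairs; [|apply NoDup_filter, ND].
      intros a b Ha Hb E. apply filter_In in Ha, Hb.
      rewrite <- (proj2 (proj2 (H a (proj1 Ha)))), <- (proj2 (proj2 (H b (proj1 Hb)))), E.
      reflexivity.
    - intros y Hy. apply in_map_iff in Hy. destruct Hy as [x [<- Hx]].
      apply filter_In in Hx. apply filter_In. split; [apply H|apply Hpq]; tauto. }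
  enough (length (filter (fun x => Z.ltb x (sg x)) S)
          = length (filter (fun x => negb (Z.ltb x (sg x))) S)) by lia.
  apply Nat.le_antisymm; apply Hmap; intros x Hx L; destruct (H x Hx) as [_ [ne ->]].
  - apply Bool.negb_true_iff, Z.ltb_ge. apply Z.ltb_lt in L. lia.
  - apply Z.ltb_lt. apply Bool.negb_true_iff, Z.ltb_ge in L. lia.
Qed.

Definition point_eq_dec (x y : R * R) : {x = y} + {x <> y}.
Proof. decide equality; apply Req_EM_T. Defined.

Lemma two_to_one_involution (f : Z -> R * R) (S : list Z) :
  (forall j, In j S -> exists i, In i S /\ i <> j /\ f i = f j /\
     forall i', In i' S -> f i' = f j -> i' = j \/ i' = i) ->
  exists sg : Z -> Z, forall j, In j S ->
    In (sg j) S /\ sg j <> j /\ sg (sg j) = j /\ f (sg j) = f j /\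
    forall i, In i S -> f i = f j -> i = j \/ i = sg j.
Proof.
  intro Hmate.
  set (other j i := andb (negb (Z.eqb i j)) (if point_eq_dec (f i) (f j) then true else false)).
  assert (other_spec : forall j i, other j i = true <-> i <> j /\ f i = f j).
  { intros j i. unfold other. rewrite Bool.andb_true_iff, Bool.negb_true_iff, Z.eqb_neq.
    destruct (point_eq_dec (f i) (f j)); intuition discriminate. }
  set (mate j := hd j (filter (other j) S)).
  assert (mate_spec : forall j i, In j S -> In i S -> i <> j -> f i = f j -> mate j = i).
  { intros j i Hj Hi ne E. destruct (Hmate j Hj) as [i0 [_ [_ [_ U]]]].
    assert (Hin : In i (filter (other j) S)) by (apply filter_In, conj, other_spec; auto).
    unfold mate. destruct (filter (other j) S) as [|a l] eqn:F; [contradiction|]. simpl.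
    assert (Ha : In a (filter (other j) S)) by (rewrite F; left; reflexivity).
    apply filter_In in Ha. destruct Ha as [Ha Pa]. apply other_spec in Pa.
    destruct (U a Ha (proj2 Pa)) as [Ea|Ea]; [tauto|].
    destruct (U i Hi E) as [Ei|Ei]; [contradiction|congruence]. }
  exists mate. intros j Hj. destruct (Hmate j Hj) as [i [Hi [ne [E U]]]].
  rewrite (mate_spec j i Hj Hi ne E), (mate_spec i j Hi Hj (not_eq_sym ne) (eq_sym E)).
  auto.
Qed.

Lemma has_card_two_to_one (f : Z -> R * R) (S : list Z) :
  NoDup S ->
  (forall j, In j S -> exists i, In i S /\ i <> j /\ f i = f j /\
     forall i', In i' S -> f i' = f j -> i' = j \/ i' = i) ->
  exists n, (2 * n = length S)%nat /\ has_card (fun x => exists j, In j S /\ x = f j) n.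
Proof.
  intros ND Hmate. destruct (two_to_one_involution f S Hmate) as [sg Hsg].
  set (Rep := filter (fun j => Z.ltb j (sg j)) S).
  exists (length Rep). split.
  - apply length_filter_lt_involution; [exact ND|]. intros j Hj. apply Hsg in Hj. tauto.
  - apply has_card_ext with (fun x => exists j, In j Rep /\ x = f j).
    + intro x. split; intros [j [Hj ->]].
      * exists j. split; [apply filter_In in Hj; tauto|reflexivity].
      * destruct (Hsg j Hj) as [Hm [ne [Inv [Ef _]]]].
        destruct (Z_lt_le_dec j (sg j)) as [L|L].
        -- exists j. split; [apply filter_In; split; [exact Hj|apply Z.ltb_lt, L]|reflexivity].
        -- exists (sg j). split; [|symmetry; exact Ef].
           apply filter_In. split; [exact Hm|]. apply Z.ltb_lt. rewrite Inv. lia.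
    + apply has_card_image; [apply NoDup_filter, ND|].
      intros a b Ha Hb E. apply filter_In in Ha, Hb.
      destruct Ha as [Ha La], Hb as [Hb Lb]. apply Z.ltb_lt in La, Lb.
      destruct (Hsg a Ha) as [_ [_ [Inv [_ U]]]].
      destruct (U b Hb (eq_sym E)) as [Eb|Eb]; subst b; [reflexivity|]. rewrite Inv in Lb. lia.
Qed.

(** * Nodes and fibres of the rhodonea curve *)

Section Rhodonea.

Variables (m1 m2 : nat) (alpha : R).

Notation rho := (rho m1 m2 alpha).

Lemma rho_shift t t' (a b : Z) :
  cos (INR m2 * t') = cos (INR m2 * t + IZR a * PI) ->
  INR m1 * t' = INR m1 * t + IZR b * PI -> Z.even a = Z.even b ->
  rho t' = rho t.
Proof.
  intros Hc Hs Hab. unfold Defs.rho.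
  replace (INR m1 * t' - alpha * PI) with ((INR m1 * t - alpha * PI) + IZR b * PI) by lra.
  rewrite Hc, cos_add_IZR_PI, sin_add_IZR_PI, cos_add_IZR_PI.
  unfold sign_of_parity. rewrite Hab. destruct (Z.even b); f_equal; ring.
Qed.

Lemma rho_eq_origin t : rho t = (0, 0) <-> cos (INR m2 * t) = 0.
Proof.
  unfold Defs.rho. split.
  - intro H. injection H as H1 H2.
    pose proof (sin2_cos2 (INR m1 * t - alpha * PI)) as S. unfold Rsqr in S. nra.
  - intro H. rewrite H. f_equal; ring.
Qed.

Lemma rho_norm_sqr t :
  fst (rho t) * fst (rho t) + snd (rho t) * snd (rho t) = cos (INR m2 * t) * cos (INR m2 * t).
Proof.
  simpl. pose proof (sin2_cos2 (INR m1 * t - alpha * PI)) as S. unfold Rsqr in S. nra.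
Qed.

Lemma rho_on_unit_circle t :
  sqrt (fst (rho t) * fst (rho t) + snd (rho t) * snd (rho t)) = 1
  <-> cos (INR m2 * t) * cos (INR m2 * t) = 1.
Proof.
  rewrite rho_norm_sqr. split.
  - intro H. rewrite <- (sqrt_sqrt (cos (INR m2 * t) * cos (INR m2 * t))), H by nra. ring.
  - intro H. rewrite H. apply sqrt_1.
Qed.

Lemma rho_eq_inv t s :
  rho t = rho s -> cos (INR m2 * s) <> 0 ->
  exists k q : Z, INR m1 * (t - s) = IZR k * PI /\
    (INR m2 * t = INR m2 * s + IZR k * PI + 2 * IZR q * PI \/
     INR m2 * t = - (INR m2 * s + IZR k * PI) + 2 * IZR q * PI).
Proof.
  unfold Defs.rho. intros H Hd. injection H as H1 H2.
  set (c := cos (INR m2 * t)) in *. set (d := cos (INR m2 * s)) in *.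
  set (th := INR m1 * t - alpha * PI) in *. set (ph := INR m1 * s - alpha * PI) in *.
  pose proof (sin2_cos2 th) as St. pose proof (sin2_cos2 ph) as Sp. unfold Rsqr in St, Sp.
  assert (Hsin : sin (th - ph) = 0).
  { assert (Hc : c <> 0) by (intro C; rewrite C in H1, H2; nra).
    apply Rmult_eq_reg_l with c; [|exact Hc].
    rewrite sin_minus. replace (c * (sin th * cos ph - cos th * sin ph))
      with ((c * sin th) * cos ph - (c * cos th) * sin ph) by ring.
    rewrite H1, H2. ring. }
  apply sin_eq_0_0 in Hsin. destruct Hsin as [k Hk].
  assert (Eth : th = ph + IZR k * PI) by lra.
  rewrite Eth, cos_add_IZR_PI in H1. rewrite Eth, sin_add_IZR_PI in H2.
  pose proof (sign_of_parity_sqr k) as Sk.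
  assert (Hcd : c = cos (INR m2 * s + IZR k * PI)).
  { rewrite cos_add_IZR_PI. fold d.
    assert (E : (c * sign_of_parity k - d) * (sin ph * sin ph + cos ph * cos ph) = 0).
    { transitivity ((c * (sign_of_parity k * sin ph) - d * sin ph) * sin ph
                    + (c * (sign_of_parity k * cos ph) - d * cos ph) * cos ph); [ring|].
      rewrite H1, H2. ring. }
    rewrite Sp, Rmult_1_r in E.
    replace c with (c * (sign_of_parity k * sign_of_parity k)) by (rewrite Sk; ring). nra. }
  destruct (cos_eq_cos _ _ Hcd) as [q Hq].
  exists k, q. split; [unfold th, ph in Hk; lra | exact Hq].
Qed.

Lemma self_intersection_of_traversed x k :
  traversed m1 m2 alpha x k -> (2 <= k)%nat -> self_intersection m1 m2 alpha x.
Proof.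
  intros [L [ND [Len HL]]] Hk. destruct L as [|t1 [|t2 L]]; simpl in Len; try lia.
  destruct (proj1 (HL t1) (or_introl eq_refl)) as [R1 E1].
  destruct (proj1 (HL t2) (or_intror (or_introl eq_refl))) as [R2 E2].
  exists t1, t2. repeat split; try tauto.
  intro E. subst t2. inversion ND. simpl in *. tauto.
Qed.

Lemma origin_not_boundary : ~ boundary_point m1 m2 alpha (0, 0).
Proof. intros [_ H]. simpl in H. rewrite Rmult_0_l, Rplus_0_l, sqrt_0 in H. lra. Qed.

Hypotheses (m1_pos : (1 <= m1)%nat) (m2_pos : (1 <= m2)%nat).

Local Notation z1 := (Z.of_nat m1).
Local Notation z2 := (Z.of_nat m2).

Definition node (j : Z) : R := IZR j * PI / (2 * INR m1 * INR m2).

Definition petals : nat := if Nat.odd (m1 + m2) then (2 * m2)%nat else m2.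

Definition nnodes : Z := 2 * z1 * Z.of_nat petals.

Lemma INR_m1_ge1 : 1 <= INR m1.
Proof. apply (le_INR 1 m1) in m1_pos. simpl in m1_pos. lra. Qed.

Lemma INR_m2_ge1 : 1 <= INR m2.
Proof. apply (le_INR 1 m2) in m2_pos. simpl in m2_pos. lra. Qed.

Ltac basic_bounds :=
  pose proof INR_m1_ge1 as ?M1; pose proof INR_m2_ge1 as ?M2; pose proof PI_RGT_0 as ?Hpi.

Lemma m2_node j : INR m2 * node j = IZR j * PI / (2 * INR m1).
Proof. basic_bounds. unfold node. field. lra. Qed.

Lemma m1_node j : INR m1 * node j = IZR j * PI / (2 * INR m2).
Proof. basic_bounds. unfold node. field. lra. Qed.

Lemma node_add j l : node (j + l) = node j + node l.
Proof. unfold node. rewrite plus_IZR. unfold Rdiv. ring. Qed.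

Lemma node_lt_iff j l : node j < node l <-> (j < l)%Z.
Proof.
  basic_bounds. assert (U : 0 < PI / (2 * INR m1 * INR m2)).
  { apply Rdiv_lt_0_compat; nra. }
  unfold node. rewrite <- !(Rmult_div_assoc (IZR _)).
  split; intro H.
  - apply lt_IZR, Rmult_lt_reg_r with (PI / (2 * INR m1 * INR m2)); assumption.
  - apply Rmult_lt_compat_r; [exact U|]. apply IZR_lt, H.
Qed.

Lemma node_inj j l : node j = node l -> j = l.
Proof.
  intro H. destruct (Z.lt_trichotomy j l) as [L|[E|L]]; [|exact E|];
  apply node_lt_iff in L; lra.
Qed.

Lemma node_of_m2_half_PI t k : INR m2 * t = IZR k * PI / 2 -> t = node (z1 * k).
Proof.
  basic_bounds. intro H. apply Rmult_eq_reg_l with (INR m2); [|lra].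
  rewrite H, m2_node. push_IZR. field. lra.
Qed.

Lemma node_of_cos_eq0 t : cos (INR m2 * t) = 0 -> exists j, t = node j.
Proof.
  intro E. apply cos_eq_0_0 in E. destruct E as [k Hk].
  exists (z1 * (2 * k + 1))%Z. apply node_of_m2_half_PI. rewrite Hk. push_IZR. field.
Qed.

Lemma node_of_cos_sqr1 t : cos (INR m2 * t) * cos (INR m2 * t) = 1 -> exists j, t = node j.
Proof.
  intro E. assert (S : sin (INR m2 * t) = 0).
  { pose proof (sin2_cos2 (INR m2 * t)) as S. unfold Rsqr in S. nra. }
  apply sin_eq_0_0 in S. destruct S as [k Hk].
  exists (z1 * (2 * k))%Z. apply node_of_m2_half_PI. rewrite Hk. push_IZR. field.
Qed.

Lemma cos_m2_node_eq0 j : cos (INR m2 * node j) = 0 <-> (2 * z1 | j - z1)%Z.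
Proof.
  basic_bounds. rewrite m2_node. split.
  - intro E. apply cos_eq_0_0 in E. destruct E as [k Hk]. exists k.
    enough (j = 2 * z1 * k + z1)%Z by lia.
    apply eq_IZR, Rmult_PI_reg_r. push_IZR.
    replace (IZR j * PI) with (IZR j * PI / (2 * INR m1) * (2 * INR m1)) by (field; lra).
    rewrite Hk. field.
  - intros [k Hk]. apply cos_eq_0_1. exists k.
    replace j with (k * (2 * z1) + z1)%Z by lia. push_IZR. field. lra.
Qed.

Lemma cos_m2_node_sqr1 j :
  cos (INR m2 * node j) * cos (INR m2 * node j) = 1 <-> (2 * z1 | j)%Z.
Proof.
  basic_bounds. rewrite m2_node. split.
  - intro E. assert (S : sin (IZR j * PI / (2 * INR m1)) = 0).
    { pose proof (sin2_cos2 (IZR j * PI / (2 * INR m1))) as S. unfold Rsqr in S. nra. }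
    apply sin_eq_0_0 in S. destruct S as [k Hk]. exists k.
    rewrite (IZR_PI_div_2m j k m1 m1_pos Hk). ring.
  - intros [k ->]. replace (IZR (k * (2 * z1)) * PI / (2 * INR m1)) with (IZR k * PI)
      by (push_IZR; field; lra).
    rewrite cos_IZR_PI. apply sign_of_parity_sqr.
Qed.

Lemma parity_sum :
  exists h, (z1 + z2 = 2 * h + (if Nat.odd (m1 + m2) then 1 else 0))%Z.
Proof.
  destruct (Nat.odd (m1 + m2)) eqn:E.
  - apply Nat.odd_spec in E. destruct E as [h Hh]. exists (Z.of_nat h). lia.
  - assert (Ev : Nat.even (m1 + m2) = true) by (rewrite <- Nat.negb_odd, E; reflexivity).
    apply Nat.even_spec in Ev. destruct Ev as [h Hh]. exists (Z.of_nat h). lia.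
Qed.

Lemma nnodes_pos : (0 < nnodes)%Z.
Proof. unfold nnodes, petals. destruct (Nat.odd (m1 + m2)); lia. Qed.

Lemma period_eq_node : period m1 m2 = node nnodes.
Proof.
  basic_bounds. unfold period, nnodes, petals, node.
  destruct (Nat.odd (m1 + m2)); push_IZR; rewrite ?mult_INR; simpl; field; lra.
Qed.

Lemma node_in_period j : 0 <= node j < period m1 m2 <-> (0 <= j < nnodes)%Z.
Proof.
  rewrite period_eq_node, node_lt_iff.
  assert (Z0 : node 0 = 0) by (unfold node; simpl; field; basic_bounds; lra).
  split; intros [A B]; split; auto.
  - destruct (Z_lt_le_dec j 0) as [L|L]; [apply node_lt_iff in L; lra|exact L].
  - destruct (Z.eq_dec j 0) as [->|E]; [lra|].
    assert (node 0 < node j) by (apply node_lt_iff; lia). lra.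
Qed.

Lemma node_mul_nnodes c : node (c * nnodes) = IZR c * period m1 m2.
Proof.
  rewrite period_eq_node. unfold node. rewrite mult_IZR. unfold Rdiv. ring.
Qed.

Lemma rho_add_period_mult t c : rho (t + IZR c * period m1 m2) = rho t.
Proof.
  destruct parity_sum as [h Hh]. unfold period. destruct (Nat.odd (m1 + m2)).
  - apply rho_shift with (2 * z2 * c)%Z (2 * z1 * c)%Z.
    + f_equal. push_IZR. ring.
    + push_IZR. ring.
    + rewrite !Z.even_mul. reflexivity.
  - apply rho_shift with (z2 * c)%Z (z1 * c)%Z.
    + f_equal. push_IZR. ring.
    + push_IZR. ring.
    + assert (Ev : Z.even (z1 + z2) = true) by (rewrite Hh, Z.add_0_r, Z.even_mul; reflexivity).
      rewrite Z.even_add in Ev. rewrite !Z.even_mul.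
      destruct (Z.even z1), (Z.even z2); try discriminate; reflexivity.
Qed.

Lemma rho_node_mod j : rho (node (j mod nnodes)) = rho (node j).
Proof.
  pose proof nnodes_pos.
  rewrite (Z.div_mod j nnodes) at 2 by lia.
  rewrite Z.add_comm, node_add, Z.mul_comm, node_mul_nnodes, rho_add_period_mult.
  reflexivity.
Qed.

Lemma nnodes_shift : exists w, nnodes = (2 * z2 * w)%Z /\ (2 * z1 | w * (z1 + z2))%Z.
Proof.
  destruct parity_sum as [h Hh]. unfold nnodes, petals.
  destruct (Nat.odd (m1 + m2)); rewrite ?Nat2Z.inj_mul.
  - exists (2 * z1)%Z. split; [ring|]. exists (z1 + z2)%Z. ring.
  - exists z1. split; [ring|]. exists h. lia.
Qed.

Lemma rho_node_eq_inv i j :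
  rho (node i) = rho (node j) -> cos (INR m2 * node j) <> 0 ->
  exists k, (i - j = 2 * z2 * k)%Z /\
    ((2 * z1 | k * (z1 + z2))%Z \/ (2 * z1 | j + k * (z1 + z2))%Z).
Proof.
  intros H Hc. basic_bounds. destruct (rho_eq_inv _ _ H Hc) as [k [q [Hk Hq]]].
  exists k.
  assert (Ek : (i - j = 2 * z2 * k)%Z).
  { apply IZR_PI_div_2m; [exact m2_pos|]. rewrite <- Hk, Rmult_minus_distr_l, !m1_node.
    push_IZR. field. lra. }
  split; [exact Ek|]. rewrite !m2_node in Hq. destruct Hq as [Hq|Hq].
  - assert (E : (i - j = 2 * z1 * (k + 2 * q))%Z).
    { apply IZR_PI_div_2m; [exact m1_pos|]. push_IZR.
      replace ((IZR i - IZR j) * PI / (2 * INR m1))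
        with (IZR i * PI / (2 * INR m1) - IZR j * PI / (2 * INR m1)) by (field; lra).
      rewrite Hq. ring. }
    left. exists (k + q)%Z. nia.
  - assert (E : (i + j = 2 * z1 * (2 * q - k))%Z).
    { apply IZR_PI_div_2m; [exact m1_pos|]. push_IZR.
      replace ((IZR i + IZR j) * PI / (2 * INR m1))
        with (IZR i * PI / (2 * INR m1) + IZR j * PI / (2 * INR m1)) by (field; lra).
      rewrite Hq. ring. }
    right. exists q. nia.
Qed.

Lemma rho_node_reflect i j k :
  (i - j = 2 * z2 * k)%Z -> (2 * z1 | j + k * (z1 + z2))%Z ->
  rho (node i) = rho (node j).
Proof.
  intros E [q Hq]. basic_bounds. apply rho_shift with k k; [|rewrite !m1_node|reflexivity].
  - rewrite !m2_node.
    replace (IZR i * PI / (2 * INR m1))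
      with (- (IZR j * PI / (2 * INR m1) + IZR k * PI) + 2 * IZR q * PI).
    + rewrite cos_add_2PI_mult, cos_neg. reflexivity.
    + replace i with (- j - 2 * z1 * k + 2 * (q * (2 * z1)))%Z by lia.
      push_IZR. field. lra.
  - replace i with (j + 2 * z2 * k)%Z by lia. push_IZR. field. lra.
Qed.

Lemma node_of_fiber t j :
  rho t = rho (node j) -> cos (INR m2 * node j) <> 0 -> exists i, t = node i.
Proof.
  intros H Hc. basic_bounds. destruct (rho_eq_inv _ _ H Hc) as [k [q [Hk _]]].
  exists (j + 2 * z2 * k)%Z. apply Rmult_eq_reg_l with (INR m1); [|lra].
  rewrite m1_node. replace t with (node j + (t - node j)) by ring.
  rewrite Rmult_plus_distr_l, Hk, m1_node. push_IZR. field. lra.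
Qed.

Lemma traversed_of_nodes x (J : list Z) :
  NoDup J ->
  (forall t, 0 <= t < period m1 m2 -> rho t = x -> exists j, t = node j) ->
  (forall j, In j J <-> (0 <= j < nnodes)%Z /\ rho (node j) = x) ->
  traversed m1 m2 alpha x (length J).
Proof.
  intros ND Hnode HJ. exists (map node J). split; [|split].
  - apply NoDup_map_NoDup_ForallPairs; [|exact ND]. intros a b _ _. apply node_inj.
  - apply length_map.
  - intro t. rewrite in_map_iff. split.
    + intros [j [<- Hj]]. apply HJ in Hj. rewrite node_in_period. exact Hj.
    + intros [R E]. destruct (Hnode t R E) as [j ->]. exists j. split; [reflexivity|].
      apply HJ. rewrite <- node_in_period. auto.
Qed.

Definition origin_nodes : list Z := residue_grid (2 * z1) petals (z1 :: nil).

Definition boundary_nodes : list Z := residue_grid (2 * z1) petals (0%Z :: nil).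

Lemma In_origin_nodes j :
  In j origin_nodes <-> (0 <= j < nnodes)%Z /\ cos (INR m2 * node j) = 0.
Proof.
  unfold origin_nodes. rewrite In_residue_grid by (try intros r [<-|[]]; lia). simpl.
  rewrite cos_m2_node_eq0, <- (Z_mod_eq_iff_divide j (2 * z1) z1) by lia.
  unfold nnodes. intuition.
Qed.

Lemma In_boundary_nodes j :
  In j boundary_nodes <-> (0 <= j < nnodes)%Z /\ (2 * z1 | j)%Z.
Proof.
  unfold boundary_nodes. rewrite In_residue_grid by (try intros r [<-|[]]; lia). simpl.
  rewrite <- (Z.mod_divide j (2 * z1)) by lia. unfold nnodes. intuition.
Qed.

Lemma traversed_origin : traversed m1 m2 alpha (0, 0) petals.
Proof.
  replace petals with (length origin_nodes)
    by (unfold origin_nodes; rewrite length_residue_grid; simpl; lia).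
  apply traversed_of_nodes.
  - apply NoDup_residue_grid; [lia|intros r [<-|[]]; lia|].
    apply NoDup_cons; [simpl; tauto|apply NoDup_nil].
  - intros t _ E. apply rho_eq_origin, node_of_cos_eq0 in E. exact E.
  - intro j. rewrite In_origin_nodes, rho_eq_origin. reflexivity.
Qed.

Lemma boundary_point_iff x :
  boundary_point m1 m2 alpha x <-> exists j, In j boundary_nodes /\ x = rho (node j).
Proof.
  split.
  - intros [[t <-] Hn]. apply rho_on_unit_circle in Hn.
    destruct (node_of_cos_sqr1 t Hn) as [j ->]. apply cos_m2_node_sqr1 in Hn.
    pose proof nnodes_pos. exists (j mod nnodes)%Z. split; [|symmetry; apply rho_node_mod].
    apply In_boundary_nodes. split; [apply Z.mod_pos_bound; lia|].
    rewrite Z.mod_eq by lia. apply Z.divide_sub_r; [exact Hn|].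
    apply Z.divide_mul_l. unfold nnodes. exists (Z.of_nat petals). ring.
  - intros [j [Hj ->]]. split; [exists (node j); reflexivity|].
    apply rho_on_unit_circle, cos_m2_node_sqr1, In_boundary_nodes, Hj.
Qed.

Lemma LS_iff_nodes x :
  LS m1 m2 alpha x <-> exists j, (0 <= j < 4 * z1 * z2)%Z /\ x = rho (node j).
Proof.
  unfold LS, node. split.
  - intros [l [Hl ->]]. exists (Z.of_nat l). split; [lia|]. rewrite <- INR_IZR_INZ. reflexivity.
  - intros [j [Hj ->]]. exists (Z.to_nat j). split; [lia|].
    rewrite (INR_IZR_INZ (Z.to_nat j)), Z2Nat.id by lia. reflexivity.
Qed.

Definition odd_residues : list Z :=
  map (fun i => 1 + i)%Z (zrange (m1 - 1)) ++ map (fun i => z1 + 1 + i)%Z (zrange (m1 - 1)).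

Lemma In_odd_residues r : In r odd_residues <-> (0 < r < 2 * z1 /\ r <> z1)%Z.
Proof.
  unfold odd_residues. rewrite in_app_iff, !in_map_iff. split.
  - intros [[i [<- Hi]]|[i [<- Hi]]]; apply In_zrange in Hi; lia.
  - intro H. destruct (Z_lt_le_dec r z1).
    + left. exists (r - 1)%Z. split; [lia|]. apply In_zrange. lia.
    + right. exists (r - z1 - 1)%Z. split; [lia|]. apply In_zrange. lia.
Qed.

Lemma NoDup_odd_residues : NoDup odd_residues.
Proof.
  unfold odd_residues. apply NoDup_app.
  - apply NoDup_map_NoDup_ForallPairs; [|apply NoDup_zrange]. intros a b _ _. lia.
  - apply NoDup_map_NoDup_ForallPairs; [|apply NoDup_zrange]. intros a b _ _. lia.
  - intros a Ha Hb. apply in_map_iff in Ha, Hb.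
    destruct Ha as [i [<- Hi]], Hb as [i' [E Hi']]. apply In_zrange in Hi, Hi'. lia.
Qed.

Definition even_residues : list Z := map (fun i => 2 + 2 * i)%Z (zrange (m1 - 1)).

Lemma In_even_residues r : In r even_residues <-> (0 < r < 2 * z1)%Z /\ (2 | r)%Z.
Proof.
  unfold even_residues. rewrite in_map_iff. split.
  - intros [i [<- Hi]]. apply In_zrange in Hi. split; [lia|]. exists (1 + i)%Z. ring.
  - intros [Hr [c ->]]. exists (c - 1)%Z. split; [ring|]. apply In_zrange. lia.
Qed.

Hypothesis m_coprime : Nat.gcd m1 m2 = 1%nat.

Lemma bezout_m : exists u v : Z, (u * z1 + v * z2 = 1)%Z.
Proof.
  destruct (Nat.gcd_bezout_pos m1 m2 ltac:(lia)) as [a [b Hab]].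
  rewrite m_coprime in Hab. exists (Z.of_nat a), (- Z.of_nat b)%Z. lia.
Qed.

Lemma rel_prime_2m1_sum : Nat.odd (m1 + m2) = true -> rel_prime (2 * z1) (z1 + z2).
Proof.
  intro Hpar. destruct bezout_m as [u [v Huv]]. destruct parity_sum as [h Hh].
  rewrite Hpar in Hh. apply rel_prime_sym, rel_prime_mult; apply bezout_rel_prime.
  - apply (Bezout_intro _ _ _ 1 (- h)). lia.
  - apply (Bezout_intro _ _ _ v (u - v)). lia.
Qed.

(* A shift by [node (2 m2 k)] along the branch [cos (m2 t) = cos (m2 s + k PI)] is a
   whole number of periods. *)
Lemma nnodes_dvd_shift k :
  (2 * z1 | k * (z1 + z2))%Z -> (nnodes | 2 * z2 * k)%Z.
Proof.
  intro Hd. destruct bezout_m as [u [v Huv]]. destruct parity_sum as [h Hh].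
  unfold nnodes, petals. destruct (Nat.odd (m1 + m2)) eqn:Hpar; rewrite ?Nat2Z.inj_mul.
  - assert (D : (2 * z1 | k)%Z).
    { apply Gauss with (z1 + z2)%Z; [rewrite (Z.mul_comm (z1 + z2)); exact Hd|].
      apply rel_prime_2m1_sum, Hpar. }
    destruct D as [r ->]. exists r. ring.
  - assert (Hrp : rel_prime z1 h).
    { apply bezout_rel_prime, (Bezout_intro _ _ _ (u - v) (2 * v)). lia. }
    assert (D : (z1 | h * k)%Z) by (destruct Hd as [r Hr]; exists r; lia).
    apply Gauss in D; [|exact Hrp]. destruct D as [r ->]. exists r. ring.
Qed.

Lemma rho_node_fiber j i :
  (0 <= j < nnodes)%Z -> (0 <= i < nnodes)%Z -> cos (INR m2 * node j) <> 0 ->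
  rho (node i) = rho (node j) ->
  i = j \/ exists k, (i - j = 2 * z2 * k)%Z /\ (2 * z1 | j + k * (z1 + z2))%Z.
Proof.
  intros Rj Ri Hc E. destruct (rho_node_eq_inv i j E Hc) as [k [Ek [D|D]]].
  - left. apply nnodes_dvd_shift in D. rewrite <- Ek in D.
    exact (Zdivide_sub_range_eq i j nnodes Ri Rj D).
  - right. exists k. auto.
Qed.

Lemma node_of_self_intersection t1 t2 :
  0 <= t1 < period m1 m2 -> 0 <= t2 < period m1 m2 -> t1 <> t2 ->
  rho t1 = rho t2 -> cos (INR m2 * t2) <> 0 -> exists j, t1 = node j.
Proof.
  intros R1 R2 Hne H Hc. basic_bounds. destruct (rho_eq_inv _ _ H Hc) as [k [q [Hk [Hq|Hq]]]].
  - (* same branch: [t1 - t2] is a multiple of the period, so [t1 = t2] *)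
    exfalso.
    assert (E : (z2 * k = z1 * (k + 2 * q))%Z).
    { apply eq_IZR, Rmult_PI_reg_r. push_IZR.
      transitivity (INR m2 * (INR m1 * (t1 - t2))); [rewrite Hk; ring|].
      transitivity (INR m1 * (INR m2 * t1 - INR m2 * t2)); [ring|]. rewrite Hq. ring. }
    destruct (nnodes_dvd_shift k) as [r Hr]; [exists (k + q)%Z; nia|].
    assert (Et : t1 - t2 = IZR r * period m1 m2).
    { rewrite <- node_mul_nnodes, <- Hr. apply Rmult_eq_reg_l with (INR m1); [|lra].
      rewrite Hk, m1_node. push_IZR. field. lra. }
    assert (r = 0)%Z as ->.
    { assert (Pp : 0 < period m1 m2) by (unfold period; destruct (Nat.odd _); lra).
      assert (L : (-1 < r)%Z /\ (r < 1)%Z); [|lia].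
      split; apply lt_IZR, Rmult_lt_reg_r with (period m1 m2); lra. }
    apply Hne. lra.
  - (* reflected branch: [m1 (t1 - t2)] and [m2 (t1 + t2)] are multiples of [PI] *)
    exists ((2 * q - k) * z1 + k * z2)%Z. unfold node. push_IZR.
    apply Rmult_eq_reg_l with (2 * INR m1 * INR m2); [|nra].
    transitivity (INR m2 * (INR m1 * (t1 - t2)) + INR m1 * (INR m2 * t1 + INR m2 * t2)); [ring|].
    rewrite Hk. replace (INR m2 * t1 + INR m2 * t2) with ((2 * IZR q - IZR k) * PI) by lra.
    field. nra.
Qed.

(* [paired j]: [rho (node j)] is a double point; the witness [k] locates the other
   parameter at [node (j + 2 m2 k)]. *)
Definition paired (j : Z) : Prop :=
  (0 <= j < nnodes)%Z /\ cos (INR m2 * node j) <> 0 /\ ~ (2 * z1 | j)%Z /\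
  exists k, (2 * z1 | j + k * (z1 + z2))%Z.

Lemma paired_fiber j : paired j ->
  exists i, (0 <= i < nnodes)%Z /\ i <> j /\ rho (node i) = rho (node j) /\
    forall i', (0 <= i' < nnodes)%Z -> rho (node i') = rho (node j) -> i' = j \/ i' = i.
Proof.
  intros [Rj [Cj [Bj [k Dk]]]]. pose proof nnodes_pos as Np.
  destruct nnodes_shift as [w [Ew Dw]].
  set (i := ((j + 2 * z2 * k) mod nnodes)%Z).
  assert (Ri : (0 <= i < nnodes)%Z) by (apply Z.mod_pos_bound; lia).
  set (q := ((j + 2 * z2 * k) / nnodes)%Z).
  assert (Ei : (i - j = 2 * z2 * (k - w * q))%Z).
  { unfold i. rewrite Z.mod_eq by lia. fold q. rewrite Ew. ring. }
  set (k' := (k - w * q)%Z) in Ei.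
  assert (Di : (2 * z1 | j + k' * (z1 + z2))%Z).
  { replace (j + k' * (z1 + z2))%Z with (j + k * (z1 + z2) - q * (w * (z1 + z2)))%Z
      by (unfold k'; ring).
    apply Z.divide_sub_r; [exact Dk|apply Z.divide_mul_r, Dw]. }
  exists i. split; [exact Ri|]. split; [|split].
  - intro E. rewrite E in Ei. assert (k' = 0)%Z as K by lia.
    rewrite K, Z.add_0_r in Di. contradiction.
  - exact (rho_node_reflect i j k' Ei Di).
  - intros i' Ri' E'. destruct (rho_node_fiber j i' Rj Ri' Cj E') as [|[k'' [Ek'' Dk'']]]; auto.
    right. apply (Zdivide_sub_range_eq i' i nnodes Ri' Ri).
    replace (i' - i)%Z with (2 * z2 * (k'' - k'))%Z by lia.
    apply nnodes_dvd_shift. replace ((k'' - k') * (z1 + z2))%Z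
      with ((j + k'' * (z1 + z2)) - (j + k' * (z1 + z2)))%Z by ring.
    apply Z.divide_sub_r; assumption.
Qed.

Lemma unpaired_fiber j i :
  (0 <= j < nnodes)%Z -> cos (INR m2 * node j) <> 0 -> ~ paired j ->
  (0 <= i < nnodes)%Z -> rho (node i) = rho (node j) -> i = j.
Proof.
  intros Rj Cj Pj Ri E. destruct (rho_node_fiber j i Rj Ri Cj E) as [|[k [Ek Dk]]]; auto.
  destruct (Zdivide_dec (2 * z1) j) as [Bj|Bj].
  - apply (Zdivide_sub_range_eq i j nnodes Ri Rj). rewrite Ek.
    apply nnodes_dvd_shift. replace (k * (z1 + z2))%Z with ((j + k * (z1 + z2)) - j)%Z by ring.
    apply Z.divide_sub_r; assumption.
  - exfalso. exact (Pj (conj Rj (conj Cj (conj Bj (ex_intro _ k Dk))))).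
Qed.

Lemma paired_of_distinct_fiber j i :
  (0 <= j < nnodes)%Z -> (0 <= i < nnodes)%Z -> i <> j -> cos (INR m2 * node j) <> 0 ->
  rho (node i) = rho (node j) -> paired j.
Proof.
  intros Rj Ri ne Cj E. destruct (classic (paired j)) as [P|P]; [exact P|].
  exfalso. exact (ne (unpaired_fiber j i Rj Cj P Ri E)).
Qed.

Lemma paired_of_self_intersection x t1 t2 :
  0 <= t1 < period m1 m2 -> 0 <= t2 < period m1 m2 -> t1 <> t2 ->
  rho t1 = x -> rho t2 = x -> x <> (0, 0) -> exists j, paired j /\ x = rho (node j).
Proof.
  intros R1 R2 ne E1 E2 Hx.
  assert (nz : forall t, rho t = x -> cos (INR m2 * t) <> 0)
    by (intros t Et C; apply rho_eq_origin in C; congruence).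
  destruct (node_of_self_intersection t1 t2 R1 R2 ne ltac:(congruence) (nz t2 E2)) as [j ->].
  destruct (node_of_self_intersection t2 (node j) R2 R1 (not_eq_sym ne) ltac:(congruence)
              (nz _ E1)) as [i ->].
  apply node_in_period in R1, R2. exists j. split; [|congruence].
  apply (paired_of_distinct_fiber j i R1 R2); [congruence|apply nz, E1|congruence].
Qed.

Lemma double_point_iff_paired x :
  x <> (0, 0) /\ ordinary_double_point m1 m2 alpha x <-> exists j, paired j /\ x = rho (node j).
Proof.
  split.
  - intros [Hx [L [NDL [Len HL]]]].
    destruct L as [|t1 [|t2 [|]]]; try discriminate.
    destruct (proj1 (HL t1) (or_introl eq_refl)) as [R1 E1].
    destruct (proj1 (HL t2) (or_intror (or_introl eq_refl))) as [R2 E2].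
    assert (ne : t1 <> t2) by (intro E; subst; inversion NDL; simpl in *; tauto).
    exact (paired_of_self_intersection x t1 t2 R1 R2 ne E1 E2 Hx).
  - intros [j [Pj ->]]. pose proof Pj as [Rj [Cj _]].
    destruct (paired_fiber j Pj) as [i [Ri [ne [Ei Uniq]]]].
    split; [rewrite rho_eq_origin; exact Cj|].
    apply (traversed_of_nodes _ (j :: i :: nil)).
    + constructor; [simpl; intuition|]. constructor; [simpl; tauto|constructor].
    + intros t _ Et. exact (node_of_fiber t j Et Cj).
    + intro i'. simpl. split.
      * intros [<-|[<-|[]]]; split; auto.
      * intros [Ri' Ei']. destruct (Uniq i' Ri' Ei'); auto.
Qed.

Lemma self_intersection_double_point x :
  self_intersection m1 m2 alpha x -> x <> (0, 0) -> ordinary_double_point m1 m2 alpha x.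
Proof.
  intros [t1 [t2 [ne [R1 [R2 [E1 E2]]]]]] Hx.
  apply double_point_iff_paired, (paired_of_self_intersection x t1 t2); auto.
Qed.

Lemma double_point_not_boundary x :
  x <> (0, 0) /\ ordinary_double_point m1 m2 alpha x -> ~ boundary_point m1 m2 alpha x.
Proof.
  intros D B. apply double_point_iff_paired in D. destruct D as [j [[_ [_ [nB _]]] ->]].
  apply nB, cos_m2_node_sqr1, (rho_on_unit_circle (node j)), B.
Qed.

Lemma has_card_boundary : has_card (boundary_point m1 m2 alpha) petals.
Proof.
  apply has_card_ext with (fun x => exists j, In j boundary_nodes /\ x = rho (node j)).
  { intro x. symmetry. apply boundary_point_iff. }
  replace petals with (length boundary_nodes)
    by (unfold boundary_nodes; rewrite length_residue_grid; simpl; lia).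
  apply has_card_image.
  - apply NoDup_residue_grid; [lia|intros r [<-|[]]; lia|].
    apply NoDup_cons; [simpl; tauto|apply NoDup_nil].
  - intros i j Hi Hj E. apply In_boundary_nodes in Hi, Hj.
    destruct Hi as [Ri _], Hj as [Rj Bj].
    assert (Cj : cos (INR m2 * node j) <> 0).
    { intro C. apply cos_m2_node_sqr1 in Bj. rewrite C in Bj. lra. }
    apply (unpaired_fiber j i Rj Cj); [intros [_ [_ [nB _]]]; contradiction|exact Ri|exact E].
Qed.

Lemma has_card_double_points (S : list Z) :
  NoDup S -> (forall j, In j S <-> paired j) ->
  exists n, (2 * n = length S)%nat /\
    has_card (fun x => x <> (0, 0) /\ ordinary_double_point m1 m2 alpha x) n.
Proof.
  intros ND HS. destruct (has_card_two_to_one (fun j => rho (node j)) S ND) as [n [Hn Hc]].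
  - intros j Hj. pose proof (proj1 (HS j) Hj) as Pj.
    destruct (paired_fiber j Pj) as [i [Ri [ne [Ei Uniq]]]].
    exists i. split; [|split; [exact ne|split; [exact Ei|]]].
    + destruct Pj as [Rj [Cj _]]. apply HS, (paired_of_distinct_fiber i j Ri Rj); auto.
      * intro C. apply Cj, rho_eq_origin. rewrite <- Ei. apply rho_eq_origin, C.
    + intros i' Hi' E. apply Uniq; [apply HS in Hi'; apply Hi'|exact E].
  - exists n. split; [exact Hn|]. apply has_card_ext with (2 := Hc).
    intro x. rewrite double_point_iff_paired. split; intros [j [Hj ->]]; exists j; split; auto;
      apply HS; exact Hj.
Qed.

Lemma paired_iff_odd j : Nat.odd (m1 + m2) = true ->
  paired j <-> (0 <= j < nnodes)%Z /\ cos (INR m2 * node j) <> 0 /\ ~ (2 * z1 | j)%Z.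
Proof.
  intro Hpar. unfold paired. split; [tauto|]. intros [Rj [Cj Bj]].
  refine (conj Rj (conj Cj (conj Bj _))).
  destruct (rel_prime_bezout _ _ (rel_prime_2m1_sum Hpar)) as [u v Huv].
  exists (- j * v)%Z. exists (j * u)%Z. rewrite <- (Z.mul_1_r j) at 1. rewrite <- Huv. ring.
Qed.

Lemma has_card_double_points_odd : Nat.odd (m1 + m2) = true ->
  has_card (fun x => x <> (0, 0) /\ ordinary_double_point m1 m2 alpha x) (2 * (m1 - 1) * m2).
Proof.
  intro Hpar. set (S := residue_grid (2 * z1) petals odd_residues).
  assert (Res : forall r, In r odd_residues -> (0 <= r < 2 * z1)%Z)
    by (intros r Hr; apply In_odd_residues in Hr; lia).
  destruct (has_card_double_points S) as [n [Hn Hc]].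
  - apply NoDup_residue_grid; [lia|exact Res|exact NoDup_odd_residues].
  - intro j. unfold S. rewrite In_residue_grid, In_odd_residues, paired_iff_odd by (auto; lia).
    rewrite cos_m2_node_eq0, <- (Z_mod_eq_iff_divide j (2 * z1) z1) by lia.
    rewrite <- (Z.mod_divide j (2 * z1)) by lia.
    pose proof (Z.mod_pos_bound j (2 * z1) ltac:(lia)). unfold nnodes. intuition lia.
  - unfold S in Hn. rewrite length_residue_grid in Hn. unfold odd_residues in Hn.
    rewrite length_app, !length_map, length_zrange in Hn. unfold petals in Hn. rewrite Hpar in Hn.
    replace (2 * (m1 - 1) * m2)%nat with n by nia. exact Hc.
Qed.

Lemma LS_iff_odd x : Nat.odd (m1 + m2) = true ->
  LS m1 m2 alpha x <-> x = (0, 0) \/ boundary_point m1 m2 alpha x \/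
                       (x <> (0, 0) /\ ordinary_double_point m1 m2 alpha x).
Proof.
  intro Hpar.
  assert (N4 : nnodes = (4 * z1 * z2)%Z)
    by (unfold nnodes, petals; rewrite Hpar, Nat2Z.inj_mul; ring).
  rewrite LS_iff_nodes, boundary_point_iff, double_point_iff_paired, <- N4.
  split.
  - intros [j [Rj ->]].
    destruct (Req_dec_T (cos (INR m2 * node j)) 0) as [C|C]; [left; apply rho_eq_origin, C|].
    right. destruct (Zdivide_dec (2 * z1) j) as [B|B].
    + left. exists j. rewrite In_boundary_nodes. auto.
    + right. exists j. rewrite paired_iff_odd by exact Hpar. auto.
  - intros [->|[[j [Hj ->]]|[j [[Rj _] ->]]]].
    + exists z1. split; [rewrite N4; nia|]. symmetry. apply rho_eq_origin, cos_m2_node_eq0.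
      exists 0%Z. ring.
    + apply In_boundary_nodes in Hj. exists j. tauto.
    + exists j. auto.
Qed.

Lemma m1_odd_of_even_sum : Nat.odd (m1 + m2) = false -> exists a, z1 = (2 * a + 1)%Z.
Proof.
  intro Hpar. destruct bezout_m as [u [v Huv]]. destruct parity_sum as [h Hh].
  rewrite Hpar in Hh. destruct (Z.Even_or_Odd z1) as [[a Ha]|[a Ha]]; [|eauto].
  exfalso. replace z2 with (2 * (h - a))%Z in Huv by lia. rewrite Ha in Huv. nia.
Qed.

Lemma paired_iff_even j : Nat.odd (m1 + m2) = false ->
  paired j <-> (0 <= j < nnodes)%Z /\ ~ (2 * z1 | j)%Z /\ (2 | j)%Z.
Proof.
  intro Hpar. destruct parity_sum as [h Hh]. rewrite Hpar in Hh. unfold paired. split.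
  - intros [Rj [_ [Bj [k [q Hq]]]]]. split; [exact Rj|split; [exact Bj|]].
    exists (q * z1 - k * h)%Z. lia.
  - intros [Rj [Bj [e He]]]. split; [exact Rj|split; [|split; [exact Bj|]]].
    + destruct (m1_odd_of_even_sum Hpar) as [a Ha].
      rewrite cos_m2_node_eq0. intros [c Hc]. lia.
    + destruct bezout_m as [u [v Huv]].
      assert (Hrp : rel_prime z1 h)
        by (apply bezout_rel_prime, (Bezout_intro _ _ _ (u - v) (2 * v)); lia).
      destruct (rel_prime_bezout _ _ Hrp) as [p q Hpq].
      exists (- e * q)%Z, (e * p)%Z. rewrite He, Hh.
      transitivity (2 * e * (p * z1 + q * h) - 2 * e * q * h)%Z; [rewrite Hpq|]; ring.
Qed.

Lemma has_card_double_points_even : Nat.odd (m1 + m2) = false ->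
  exists n, (2 * n = (m1 - 1) * m2)%nat /\
    has_card (fun x => x <> (0, 0) /\ ordinary_double_point m1 m2 alpha x) n.
Proof.
  intro Hpar. set (S := residue_grid (2 * z1) petals even_residues).
  assert (Res : forall r, In r even_residues -> (0 <= r < 2 * z1)%Z)
    by (intros r Hr; apply In_even_residues in Hr; lia).
  destruct (has_card_double_points S) as [n [Hn Hc]].
  - apply NoDup_residue_grid; [lia|exact Res|].
    apply NoDup_map_NoDup_ForallPairs; [|apply NoDup_zrange]. intros a b _ _. lia.
  - intro j. unfold S. rewrite In_residue_grid, In_even_residues, paired_iff_even by (auto; lia).
    rewrite <- (Z.mod_divide j (2 * z1)) by lia.
    assert (E2 : (2 | j mod (2 * z1))%Z <-> (2 | j)%Z).
    { rewrite Z.mod_eq by lia. split; intro D.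
      - replace j with (j - 2 * z1 * (j / (2 * z1)) + 2 * (z1 * (j / (2 * z1))))%Z by ring.
        apply Z.divide_add_r; [exact D|apply Z.divide_factor_l].
      - apply Z.divide_sub_r; [exact D|]. exists (z1 * (j / (2 * z1)))%Z. ring. }
    pose proof (Z.mod_pos_bound j (2 * z1) ltac:(lia)). unfold nnodes. rewrite E2. intuition lia.
  - exists n. split; [|exact Hc]. unfold S in Hn.
    rewrite length_residue_grid in Hn. unfold even_residues, petals in Hn.
    rewrite length_map, length_zrange in Hn.
    rewrite Hpar in Hn. lia.
Qed.

Lemma self_intersection_iff_odd x : Nat.odd (m1 + m2) = true ->
  self_intersection m1 m2 alpha x <->
  x = (0, 0) \/ (x <> (0, 0) /\ ordinary_double_point m1 m2 alpha x).
Proof.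
  intro Hpar. split.
  - intro S. destruct (point_eq_dec x (0, 0)) as [->|nz]; [left; reflexivity|].
    right. split; [exact nz|]. exact (self_intersection_double_point x S nz).
  - intros [->|[_ D]]; eapply self_intersection_of_traversed.
    + apply traversed_origin.
    + unfold petals. rewrite Hpar. lia.
    + exact D.
    + lia.
Qed.

Lemma has_card_LS_odd : Nat.odd (m1 + m2) = true ->
  has_card (LS m1 m2 alpha) (2 * m1 * m2 + 1).
Proof.
  intro Hpar.
  apply has_card_ext with (fun x => (x = (0, 0) \/ boundary_point m1 m2 alpha x) \/
                                    (x <> (0, 0) /\ ordinary_double_point m1 m2 alpha x)).
  { intro x. rewrite LS_iff_odd by exact Hpar. tauto. }
  replace (2 * m1 * m2 + 1)%nat with (1 + petals + 2 * (m1 - 1) * m2)%nat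
    by (unfold petals; rewrite Hpar; nia).
  apply has_card_disjoint_union; [apply has_card_disjoint_union| |].
  - apply has_card_singleton.
  - apply has_card_boundary.
  - intros x -> B. exact (origin_not_boundary B).
  - apply has_card_double_points_odd, Hpar.
  - intros x [->|B] D; [exact (proj1 D eq_refl)|]. exact (double_point_not_boundary x D B).
Qed.

End Rhodonea.

Theorem corollary2p2 (m1 m2 : nat) (alpha : R) :
  (1 <= m1)%nat -> (1 <= m2)%nat -> Nat.gcd m1 m2 = 1%nat ->
  (Nat.odd (m1 + m2) = true ->
     (forall x : R * R, LS m1 m2 alpha x <->
        (self_intersection m1 m2 alpha x \/ boundary_point m1 m2 alpha x)) /\
     has_card (LS m1 m2 alpha) (2 * m1 * m2 + 1) /\
     LS m1 m2 alpha (0, 0) /\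
     traversed m1 m2 alpha (0, 0) (2 * m2) /\
     has_card (fun x => x <> (0, 0) /\ ordinary_double_point m1 m2 alpha x)
              (2 * (m1 - 1) * m2) /\
     has_card (boundary_point m1 m2 alpha) (2 * m2) /\
     (forall x, LS m1 m2 alpha x ->
        x = (0, 0) \/ (x <> (0, 0) /\ ordinary_double_point m1 m2 alpha x)
        \/ boundary_point m1 m2 alpha x)) /\
  (Nat.odd (m1 + m2) = false ->
     (exists n : nat, (2 * n = (m1 - 1) * m2)%nat /\
        has_card (fun x => x <> (0, 0) /\ ordinary_double_point m1 m2 alpha x) n) /\
     has_card (boundary_point m1 m2 alpha) m2 /\
     traversed m1 m2 alpha (0, 0) m2).
Proof.
  intros h1 h2 hg. split; intro Hpar.
  - assert (P : petals m1 m2 = (2 * m2)%nat) by (unfold petals; rewrite Hpar; reflexivity).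
    pose proof (traversed_origin m1 m2 alpha h1 h2) as T0.
    pose proof (has_card_boundary m1 m2 alpha h1 h2 hg) as Bd. rewrite P in T0, Bd.
    pose proof (fun x => LS_iff_odd m1 m2 alpha h1 h2 hg x Hpar) as LSi.
    split; [|split; [|split; [|split; [|split; [|split]]]]].
    + intro x. rewrite LSi, self_intersection_iff_odd by assumption. tauto.
    + apply has_card_LS_odd; assumption.
    + apply LSi. left. reflexivity.
    + exact T0.
    + apply has_card_double_points_odd; assumption.
    + exact Bd.
    + intros x Hx. apply LSi in Hx. tauto.
  - assert (P : petals m1 m2 = m2) by (unfold petals; rewrite Hpar; reflexivity).
    pose proof (traversed_origin m1 m2 alpha h1 h2) as T0.
    pose proof (has_card_boundary m1 m2 alpha h1 h2 hg) as Bd. rewrite P in T0, Bd.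
    split; [apply has_card_double_points_even; assumption|auto].
Qed.
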